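(* Over $\mathsf{RCA}_0$, the Ordered Ramsey Theorem for pairs implies $\Sigma^0_2\text{-}\mathsf{IND}$.
   Context: $\mathsf{RCA}_0$: second-order arithmetic with $\Delta^0_1$-comprehension and $\Sigma^0_1$-induction. $\Sigma^0_2\text{-}\mathsf{IND}$: the induction scheme for $\Sigma^0_2$ formulae with parameters (equivalently over $\mathsf{RCA}_0$, for $\Pi^0_2$ formulae). Ordered Ramsey Theorem for pairs: if $(P,\preceq)$ is a finite partial order and $C:[\mathbb{N}]^2\to P$ satisfies $C(i,j)\succeq C(i,k)$ for all $i<j<k$, then there is an infinite $I\subseteq\mathbb{N}$ on which $C$ is constant. *)

(* ---------- Syntax (de Bruijn indices; number and set variables separate) *)

Inductive term : Type :=
| tvar (n : nat)
| tzero
| tone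
| tadd (a b : term)
| tmul (a b : term).

Inductive form : Type :=
| fEq  (a b : term)
| fLt  (a b : term)
| fMem (a : term) (X : nat)
| fNot (p : form)
| fAnd (p q : form)
| fOr  (p q : form)
| fImp (p q : form)
| fAll (p : form)
| fEx  (p : form)
| fBAll (t : term) (p : form)        (* ∀x < t, p ; t in the outer context     *)
| fBEx  (t : term) (p : form)
| fSAll (p : form)
| fSEx  (p : form).

Record structure : Type := {
  Num  : Type;
  Sets : Type;
  zero : Num;
  one  : Num;
  add  : Num -> Num -> Num;
  mul  : Num -> Num -> Num;
  lt   : Num -> Num -> Prop;
  mem  : Num -> Sets -> Prop
}.

Definition scons {A : Type} (a : A) (f : nat -> A) : nat -> A :=
  fun n => match n with O => a | Datatypes.S k => f k end.

Fixpoint eval (A : structure) (rho : nat -> Num A) (t : term) : Num A :=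
  match t with
  | tvar n => rho n
  | tzero => zero A
  | tone => one A
  | tadd a b => add A (eval A rho a) (eval A rho b)
  | tmul a b => mul A (eval A rho a) (eval A rho b)
  end.

Fixpoint sat (A : structure) (rho : nat -> Num A) (sig : nat -> Sets A)
  (p : form) : Prop :=
  match p with
  | fEq a b => eval A rho a = eval A rho b
  | fLt a b => lt A (eval A rho a) (eval A rho b)
  | fMem a X => mem A (eval A rho a) (sig X)
  | fNot p => ~ sat A rho sig p
  | fAnd p q => sat A rho sig p /\ sat A rho sig q
  | fOr p q => sat A rho sig p \/ sat A rho sig q
  | fImp p q => sat A rho sig p -> sat A rho sig q
  | fAll p => forall m, sat A (scons m rho) sig p
  | fEx p => exists m, sat A (scons m rho) sig p
  | fBAll t p => forall m, lt A m (eval A rho t) -> sat A (scons m rho) sig p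
  | fBEx t p => exists m, lt A m (eval A rho t) /\ sat A (scons m rho) sig p
  | fSAll p => forall X, sat A rho (scons X sig) p
  | fSEx p => exists X, sat A rho (scons X sig) p
  end.

Inductive Delta00 : form -> Prop :=
| D0Eq a b : Delta00 (fEq a b)
| D0Lt a b : Delta00 (fLt a b)
| D0Mem a X : Delta00 (fMem a X)
| D0Not p : Delta00 p -> Delta00 (fNot p)
| D0And p q : Delta00 p -> Delta00 q -> Delta00 (fAnd p q)
| D0Or p q : Delta00 p -> Delta00 q -> Delta00 (fOr p q)
| D0Imp p q : Delta00 p -> Delta00 q -> Delta00 (fImp p q)
| D0BAll t p : Delta00 p -> Delta00 (fBAll t p)
| D0BEx t p : Delta00 p -> Delta00 (fBEx t p).

Inductive Sigma0 : nat -> form -> Prop :=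
| Sig_D0 p : Delta00 p -> Sigma0 0 p
| Sig_Pi n p : Pi0 n p -> Sigma0 (Datatypes.S n) p
| Sig_Ex n p : Sigma0 (Datatypes.S n) p -> Sigma0 (Datatypes.S n) (fEx p)
with Pi0 : nat -> form -> Prop :=
| Pi_D0 p : Delta00 p -> Pi0 0 p
| Pi_Sig n p : Sigma0 n p -> Pi0 (Datatypes.S n) p
| Pi_All n p : Pi0 (Datatypes.S n) p -> Pi0 (Datatypes.S n) (fAll p).

(* Basic axioms (Simpson, SOSOA, Def. I.2.4 (i)). *)
Definition BasicAxioms (A : structure) : Prop :=
  (forall n : Num A, add A n (one A) <> zero A) /\
  (forall m n : Num A, add A m (one A) = add A n (one A) -> m = n) /\
  (forall m : Num A, add A m (zero A) = m) /\
  (forall m n : Num A, add A m (add A n (one A)) = add A (add A m n) (one A)) /\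
  (forall m : Num A, mul A m (zero A) = zero A) /\
  (forall m n : Num A, mul A m (add A n (one A)) = add A (mul A m n) m) /\
  (forall m : Num A, ~ lt A m (zero A)) /\
  (forall m n : Num A, lt A m (add A n (one A)) <-> (lt A m n \/ m = n)).

(* Induction for the formula p in its free number variable 0 (the other free
   variables are parameters, universally quantified). *)
Definition InductionFor (A : structure) (p : form) : Prop :=
  forall (rho : nat -> Num A) (sig : nat -> Sets A),
    sat A (scons (zero A) rho) sig p ->
    (forall m, sat A (scons m rho) sig p ->
               sat A (scons (add A m (one A)) rho) sig p) ->
    forall m, sat A (scons m rho) sig p.

Definition SigmaInduction (n : nat) (A : structure) : Prop :=
  forall p, Sigma0 n p -> InductionFor A p.

Definition Delta01Comprehension (A : structure) : Prop :=
  forall p q, Sigma0 1 p -> Pi0 1 q ->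
  forall (rho : nat -> Num A) (sig : nat -> Sets A),
    (forall m, sat A (scons m rho) sig p <-> sat A (scons m rho) sig q) ->
    exists X : Sets A, forall m, mem A m X <-> sat A (scons m rho) sig p.

Definition RCA0 (A : structure) : Prop :=
  BasicAxioms A /\ SigmaInduction 1 A /\ Delta01Comprehension A.

(* Cantor pairing as in RCA_0: (m,n) = (m+n)^2 + m. *)
Definition pr (A : structure) (m n : Num A) : Num A :=
  add A (mul A (add A m n) (add A m n)) m.

(* R (a set of codes of pairs, (a,b) ∈ R meaning a ⪯ b) is a partial order
   on the finite set P = {a | a < k}. *)
Definition FinPartialOrder (A : structure) (k : Num A) (R : Sets A) : Prop :=
  (forall a, lt A a k -> mem A (pr A a a) R) /\
  (forall a b, lt A a k -> lt A b k ->
     mem A (pr A a b) R -> mem A (pr A b a) R -> a = b) /\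
  (forall a b c, lt A a k -> lt A b k -> lt A c k ->
     mem A (pr A a b) R -> mem A (pr A b c) R -> mem A (pr A a c) R).

(* The set C codes a function C : [N]^2 -> P, ((i,j),c) ∈ C meaning C(i,j)=c. *)
Definition Coloring (A : structure) (k : Num A) (C : Sets A) : Prop :=
  forall i j, lt A i j ->
    exists c, lt A c k /\ mem A (pr A (pr A i j) c) C /\
      forall c', mem A (pr A (pr A i j) c') C -> c' = c.

Definition OrderedColoring (A : structure) (R C : Sets A) : Prop :=
  forall i j l c1 c2, lt A i j -> lt A j l ->
    mem A (pr A (pr A i j) c1) C -> mem A (pr A (pr A i l) c2) C ->
    mem A (pr A c2 c1) R.

Definition ORT (A : structure) : Prop :=
  forall (k : Num A) (R C : Sets A),
    FinPartialOrder A k R -> Coloring A k C -> OrderedColoring A R C ->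
    exists I : Sets A,
      (forall m, exists n, lt A m n /\ mem A n I) /\
      exists c, forall i j, mem A i I -> mem A j I -> lt A i j ->
        mem A (pr A (pr A i j) c) C.

(* Suppose Sigma^0_2 induction fails for phi(x) = exists ys, forall zs, th(x, ys, zs): phi(0) and
   phi(x) -> phi(x+1) hold, but not phi(a).  Colour a pair i < j by the least x <= a for which the
   approximation "exists ys < i, forall zs < j, th" fails (or by a if there is none).  The
   approximation weakens as j grows, so the colouring is ordered for the usual order on [0, a].
   On an infinite homogeneous set of colour c, phi(c) fails, since a witness ys for phi(c) lies
   below some element i of the set.  If c = c' + 1, then for some fixed i the approximation holds
   for c' and every j, so Sigma^0_0 bounding (a consequence of I Sigma^0_1) gives phi(c').
   Hence c is neither 0 nor the successor of a number satisfying phi, which is absurd. *)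

From Stdlib Require Import List Lia Arith Classical.
Import ListNotations.

Fixpoint rename_term (xi : nat -> nat) (t : term) : term :=
  match t with
  | tvar n => tvar (xi n)
  | tzero => tzero
  | tone => tone
  | tadd a b => tadd (rename_term xi a) (rename_term xi b)
  | tmul a b => tmul (rename_term xi a) (rename_term xi b)
  end.

Definition up_ren (xi : nat -> nat) (i : nat) : nat :=
  match i with O => O | S i => S (xi i) end.

Fixpoint rename (xi : nat -> nat) (p : form) : form :=
  match p with
  | fEq a b => fEq (rename_term xi a) (rename_term xi b)
  | fLt a b => fLt (rename_term xi a) (rename_term xi b)
  | fMem a X => fMem (rename_term xi a) X
  | fNot p => fNot (rename xi p)
  | fAnd p q => fAnd (rename xi p) (rename xi q)
  | fOr p q => fOr (rename xi p) (rename xi q)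
  | fImp p q => fImp (rename xi p) (rename xi q)
  | fAll p => fAll (rename (up_ren xi) p)
  | fEx p => fEx (rename (up_ren xi) p)
  | fBAll t p => fBAll (rename_term xi t) (rename (up_ren xi) p)
  | fBEx t p => fBEx (rename_term xi t) (rename (up_ren xi) p)
  | fSAll p => fSAll (rename xi p)
  | fSEx p => fSEx (rename xi p)
  end.

Lemma eval_rename_term A xi rho rho' t : (forall i, rho' (xi i) = rho i) ->
  eval A rho' (rename_term xi t) = eval A rho t.
Proof. intros E; induction t; cbn; congruence. Qed.

Lemma sat_rename A p : forall xi rho rho' sig, (forall i, rho' (xi i) = rho i) ->
  sat A rho' sig (rename xi p) <-> sat A rho sig p.
Proof.
  induction p; intros xi rho rho' sig E;
    assert (Eup : forall m i, scons m rho' (up_ren xi i) = scons m rho i)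
      by (intros m [|i]; cbn; auto);
    cbn [rename sat]; rewrite ?(eval_rename_term A xi rho rho' _ E);
    try setoid_rewrite (fun m => IHp _ (scons m rho) (scons m rho') sig (Eup m));
    try setoid_rewrite (fun sig' => IHp _ rho rho' sig' E);
    try rewrite (IHp1 _ rho rho' sig E), (IHp2 _ rho rho' sig E); reflexivity.
Qed.

Lemma Delta00_rename xi p : Delta00 p -> Delta00 (rename xi p).
Proof. intros H; revert xi; induction H; intros xi; constructor; auto. Qed.
Fixpoint prepend {X} (vs : list X) (r : nat -> X) : nat -> X :=
  match vs with [] => r | v :: vs => scons v (prepend vs r) end.

Lemma prepend_app {X} (u v : list X) r : prepend (u ++ v) r = prepend u (prepend v r).
Proof. induction u; cbn; congruence. Qed.

Lemma prepend_snoc {X} (vs : list X) m r : prepend (vs ++ [m]) r = prepend vs (scons m r).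
Proof. rewrite prepend_app; reflexivity. Qed.

Lemma prepend_lt {X} (vs : list X) r i : i < length vs -> prepend vs r i = nth i vs (r 0).
Proof.
  revert i; induction vs; cbn; intros [|i] Hi; auto; try lia. apply IHvs; lia.
Qed.

Lemma prepend_ge {X} (vs : list X) r i : length vs <= i -> prepend vs r i = r (i - length vs).
Proof.
  revert i; induction vs; cbn; intros [|i] Hi; auto; try lia. apply IHvs; lia.
Qed.

Lemma length_S_snoc {X} (l : list X) k : length l = S k ->
  exists l' x, l = l' ++ [x] /\ length l' = k.
Proof.
  intros H. destruct (exists_last (l := l)) as [l' [x ->]]; [intros ->; discriminate|].
  exists l', x. rewrite length_app in H; cbn in H. split; [reflexivity|lia].
Qed.

(* Each of the [k] variables bound by [fBExs k m p] ranges below the variable [m] of the context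
   of the whole formula (the index is shifted as binders are crossed). *)
Fixpoint fExs k p := match k with O => p | S k => fEx (fExs k p) end.
Fixpoint fAlls k p := match k with O => p | S k => fAll (fAlls k p) end.
Fixpoint fBExs k m p := match k with O => p | S k => fBEx (tvar m) (fBExs k (S m) p) end.
Fixpoint fBAlls k m p := match k with O => p | S k => fBAll (tvar m) (fBAlls k (S m) p) end.

Section IteratedQuantifiers.
Variables (A : structure) (sig : nat -> Sets A).

Lemma sat_fExs k p : forall rho,
  sat A rho sig (fExs k p) <-> exists vs, length vs = k /\ sat A (prepend vs rho) sig p.
Proof.
  induction k; intros rho; cbn.
  - split; [exists []; auto|intros [[|] [Hl H]]; [exact H|discriminate]].
  - split.
    + intros [m [vs [Hl H]]%IHk]. exists (vs ++ [m]).
      rewrite prepend_snoc, length_app, Hl; cbn; split; [lia|exact H].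
    + intros [vs [Hl H]]. destruct (length_S_snoc vs k Hl) as [l' [x [-> Hl']]].
      rewrite prepend_snoc in H. exists x. apply IHk. eauto.
Qed.

Lemma sat_fAlls k p : forall rho,
  sat A rho sig (fAlls k p) <-> forall vs, length vs = k -> sat A (prepend vs rho) sig p.
Proof.
  induction k; intros rho; cbn.
  - split; [intros H [|] Hl; [exact H|discriminate]|intros H; apply (H []); auto].
  - split.
    + intros H vs Hl. destruct (length_S_snoc vs k Hl) as [l' [x [-> Hl']]].
      rewrite prepend_snoc. apply IHk; auto.
    + intros H m. apply IHk. intros vs Hl. rewrite <- prepend_snoc.
      apply H. rewrite length_app, Hl; cbn; lia.
Qed.

Lemma sat_fBExs k p : forall m rho,
  sat A rho sig (fBExs k m p) <-> exists vs, length vs = k /\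
    Forall (fun y => lt A y (rho m)) vs /\ sat A (prepend vs rho) sig p.
Proof.
  induction k; intros m rho; cbn.
  - split; [exists []; auto|intros [[|] [Hl [_ H]]]; [exact H|discriminate]].
  - split.
    + intros [y [Hy [vs [Hl [Hf H]]]%IHk]]. exists (vs ++ [y]).
      rewrite prepend_snoc, length_app, Hl, Forall_app; cbn; repeat split; auto; lia.
    + intros [vs [Hl [Hf H]]]. destruct (length_S_snoc vs k Hl) as [l' [x [-> Hl']]].
      apply Forall_app in Hf as [Hf1 Hf2]. inversion Hf2; subst.
      rewrite prepend_snoc in H. exists x; split; auto. apply IHk. eauto.
Qed.

Lemma sat_fBAlls k p : forall m rho,
  sat A rho sig (fBAlls k m p) <-> forall vs, length vs = k ->
    Forall (fun y => lt A y (rho m)) vs -> sat A (prepend vs rho) sig p.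
Proof.
  induction k; intros m rho; cbn.
  - split; [intros H [|] Hl _; [exact H|discriminate]|intros H; apply (H []); auto].
  - split.
    + intros H vs Hl Hf. destruct (length_S_snoc vs k Hl) as [l' [x [-> Hl']]].
      apply Forall_app in Hf as [Hf1 Hf2]. inversion Hf2; subst.
      rewrite prepend_snoc. apply (IHk (S m) (scons x rho)); auto.
    + intros H y Hy. apply IHk. intros vs Hl Hf. rewrite <- prepend_snoc.
      apply H; [rewrite length_app, Hl; cbn; lia|apply Forall_app; auto].
Qed.

End IteratedQuantifiers.

Lemma Delta00_fBExs k m p : Delta00 p -> Delta00 (fBExs k m p).
Proof. revert m; induction k; cbn; intros; auto; constructor; auto. Qed.

Lemma Delta00_fBAlls k m p : Delta00 p -> Delta00 (fBAlls k m p).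
Proof. revert m; induction k; cbn; intros; auto; constructor; auto. Qed.

Lemma Delta00_Sigma01 p : Delta00 p -> Sigma0 1 p.
Proof. intros H; apply Sig_Pi, Pi_D0, H. Qed.

Lemma Pi01_normal_form p : Pi0 1 p -> exists l q, Delta00 q /\ p = fAlls l q.
Proof.
  intros H. remember 1 as n. induction H; try discriminate; injection Heqn as ->.
  - inversion H; subst. exists 0, p; auto.
  - destruct (IHPi0 eq_refl) as [l [q [Hq ->]]]. exists (S l), q; auto.
Qed.

Lemma Sigma02_normal_form p : Sigma0 2 p -> exists k l q, Delta00 q /\ p = fExs k (fAlls l q).
Proof.
  intros H. remember 2 as n. induction H; try discriminate; injection Heqn as ->.
  - destruct (Pi01_normal_form p H) as [l [q [Hq ->]]]. exists 0, l, q; auto.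
  - destruct (IHSigma0 eq_refl) as [k [l [q [Hq ->]]]]. exists (S k), l, q; auto.
Qed.

Section Model.
Variables (A : structure) (sig : nat -> Sets A).
Hypothesis BA : BasicAxioms A.
Hypothesis ID0 : forall p, Delta00 p -> InductionFor A p.

Local Notation N := (Num A).
Local Notation z := (zero A).
Local Notation sc x := (add A x (one A)).
Local Notation "x + y" := (add A x y).
Local Notation "x * y" := (mul A x y).
Local Notation "x < y" := (lt A x y).

Definition le_num (a b : N) := a < b \/ a = b.
Local Notation "x <= y" := (le_num x y).

Lemma succ_inj m n : sc m = sc n -> m = n. Proof. apply BA. Qed.
Lemma add_0_r m : m + z = m. Proof. apply BA. Qed.
Lemma add_succ_r m n : m + sc n = sc (m + n). Proof. apply BA. Qed.
Lemma mul_0_r m : m * z = z. Proof. apply BA. Qed.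
Lemma mul_succ_r m n : m * sc n = m * n + m. Proof. apply BA. Qed.
Lemma nlt_0_r m : ~ m < z. Proof. apply BA. Qed.
Lemma lt_succ_r m n : m < sc n <-> m < n \/ m = n. Proof. apply BA. Qed.

Ltac delta0_induction P rho :=
  let H := fresh in
  pose proof (ID0 P ltac:(repeat constructor) rho sig) as H;
  cbn [sat eval scons] in H; apply H; clear H.

Lemma lt_trans a b c : a < b -> b < c -> a < c.
Proof.
  revert c.
  delta0_induction (fImp (fLt (tvar 1) (tvar 2)) (fImp (fLt (tvar 2) (tvar 0)) (fLt (tvar 1) (tvar 0))))
    (scons a (scons b (fun _ => z))).
  - intros _ H. exfalso; eapply nlt_0_r; eauto.
  - intros c IH H1 H2. apply lt_succ_r in H2 as [H2|<-]; apply lt_succ_r; auto.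
Qed.

Lemma lt_succ_diag_r a : a < sc a. Proof. apply lt_succ_r; auto. Qed.

Lemma lt_irrefl a : ~ a < a.
Proof.
  revert a. delta0_induction (fNot (fLt (tvar 0) (tvar 0))) (fun _ : nat => z).
  - apply nlt_0_r.
  - intros m IH [H|E]%lt_succ_r; apply IH.
    + eapply lt_trans; [apply lt_succ_diag_r|exact H].
    + rewrite <- E at 2. apply lt_succ_diag_r.
Qed.

Lemma le_0_l a : z <= a.
Proof.
  revert a. delta0_induction (fOr (fLt tzero (tvar 0)) (fEq tzero (tvar 0))) (fun _ : nat => z).
  - right; reflexivity.
  - intros m H. left; apply lt_succ_r; destruct H; auto.
Qed.

Lemma le_succ_l b a : b < a -> sc b <= a.
Proof.
  revert a.
  delta0_induction (fImp (fLt (tvar 1) (tvar 0))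
      (fOr (fLt (tadd (tvar 1) tone) (tvar 0)) (fEq (tadd (tvar 1) tone) (tvar 0))))
    (scons b (fun _ => z)).
  - intros H; exfalso; eapply nlt_0_r; eauto.
  - intros m IH [H| ->]%lt_succ_r; [left; apply lt_succ_r; destruct (IH H)|right]; auto.
Qed.

Lemma lt_trichotomy a b : a < b \/ a = b \/ b < a.
Proof.
  revert b.
  delta0_induction (fOr (fLt (tvar 1) (tvar 0)) (fOr (fEq (tvar 1) (tvar 0)) (fLt (tvar 0) (tvar 1))))
    (scons a (fun _ => z)).
  - destruct (le_0_l a) as [H|H]; auto.
  - intros m [H|[<-|H]]; [left; apply lt_succ_r; auto|left; apply lt_succ_diag_r|].
    destruct (le_succ_l _ _ H); auto.
Qed.

Lemma zero_or_succ x : x = z \/ exists p, x = sc p.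
Proof.
  enough (H : x = z \/ exists p, p < x /\ x = sc p) by (destruct H as [|[p [_ ?]]]; eauto).
  revert x.
  delta0_induction (fOr (fEq (tvar 0) tzero) (fBEx (tvar 0) (fEq (tvar 1) (tadd (tvar 0) tone))))
    (fun _ : nat => z).
  - auto.
  - intros m _. right. exists m. split; [apply lt_succ_diag_r|reflexivity].
Qed.

Lemma le_refl a : a <= a. Proof. right; reflexivity. Qed.
Lemma lt_le_incl a b : a < b -> a <= b. Proof. intros H; left; exact H. Qed.
Lemma lt_le_trans a b c : a < b -> b <= c -> a < c.
Proof. intros H [H'| <-]; eauto using lt_trans. Qed.
Lemma le_lt_trans a b c : a <= b -> b < c -> a < c.
Proof. intros [H'| <-] H; eauto using lt_trans. Qed.
Lemma le_trans a b c : a <= b -> b <= c -> a <= c.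
Proof. intros [H| <-] H'; [left; eapply lt_le_trans|]; eauto. Qed.
Lemma lt_nge a b : a < b -> ~ b <= a.
Proof. intros H H'. eapply lt_irrefl, lt_le_trans; eauto. Qed.
Lemma nlt_ge a b : ~ a < b -> b <= a.
Proof. intros H. destruct (lt_trichotomy a b) as [|[->|]]; [tauto|apply le_refl|left; auto]. Qed.
Lemma le_antisymm a b : a <= b -> b <= a -> a = b.
Proof. intros [H|H] H'; [exfalso; eapply lt_nge|]; eauto. Qed.
Lemma lt_succ_le a b : a <= b -> a < sc b.
Proof. intros [H|H]; apply lt_succ_r; auto. Qed.
Lemma succ_lt_mono a b : a < b -> sc a < sc b.
Proof. intros H. apply lt_succ_le, le_succ_l, H. Qed.

Lemma le_max a b : exists c, a <= c /\ b <= c.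
Proof.
  destruct (lt_trichotomy a b) as [H|[<-|H]]; [exists b|exists a|exists a];
    auto using le_refl, lt_le_incl.
Qed.

Lemma list_bounded (l : list N) : exists B, Forall (fun y => y < B) l.
Proof.
  induction l as [|y l [B HB]]; [exists z; constructor|].
  destruct (le_max B (sc y)) as [C [H1 H2]]. exists (sc C). constructor.
  - eapply lt_trans; [apply lt_succ_diag_r|apply lt_succ_le, H2].
  - eapply Forall_impl; [|exact HB]. intros x Hx. eapply lt_le_trans; [exact Hx|].
    left; apply lt_succ_le, H1.
Qed.

Lemma add_0_l x : z + x = x.
Proof.
  revert x. delta0_induction (fEq (tadd tzero (tvar 0)) (tvar 0)) (fun _ : nat => z).
  - apply add_0_r.
  - intros m IH. rewrite add_succ_r, IH; reflexivity.
Qed.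

Lemma add_succ_l x y : sc x + y = sc (x + y).
Proof.
  revert y.
  delta0_induction (fEq (tadd (tadd (tvar 1) tone) (tvar 0)) (tadd (tadd (tvar 1) (tvar 0)) tone))
    (scons x (fun _ => z)).
  - rewrite !add_0_r; reflexivity.
  - intros m IH. rewrite !add_succ_r, IH; reflexivity.
Qed.

Lemma add_comm x y : x + y = y + x.
Proof.
  revert y.
  delta0_induction (fEq (tadd (tvar 1) (tvar 0)) (tadd (tvar 0) (tvar 1))) (scons x (fun _ => z)).
  - rewrite add_0_r, add_0_l; reflexivity.
  - intros m IH. rewrite add_succ_r, add_succ_l, IH; reflexivity.
Qed.

Lemma add_assoc a b c : (a + b) + c = a + (b + c).
Proof.
  revert c.
  delta0_induction (fEq (tadd (tadd (tvar 1) (tvar 2)) (tvar 0)) (tadd (tvar 1) (tadd (tvar 2) (tvar 0))))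
    (scons a (scons b (fun _ => z))).
  - rewrite !add_0_r; reflexivity.
  - intros m IH. rewrite !add_succ_r, IH; reflexivity.
Qed.

Lemma add_cancel_l c a b : c + a = c + b -> a = b.
Proof.
  revert c.
  delta0_induction (fImp (fEq (tadd (tvar 0) (tvar 1)) (tadd (tvar 0) (tvar 2))) (fEq (tvar 1) (tvar 2)))
    (scons a (scons b (fun _ => z))).
  - rewrite !add_0_l; auto.
  - intros m IH H. rewrite !add_succ_l in H. apply IH, succ_inj, H.
Qed.

Lemma add_lt_mono_r a b c : a < b -> a + c < b + c.
Proof.
  revert c.
  delta0_induction (fImp (fLt (tvar 1) (tvar 2)) (fLt (tadd (tvar 1) (tvar 0)) (tadd (tvar 2) (tvar 0))))
    (scons a (scons b (fun _ => z))).
  - rewrite !add_0_r; auto.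
  - intros m IH H. rewrite !add_succ_r. apply succ_lt_mono; auto.
Qed.

Lemma add_le_mono_r a b c : a <= b -> a + c <= b + c.
Proof. intros [H| <-]; [left; apply add_lt_mono_r, H|apply le_refl]. Qed.

Lemma add_le_mono_l a b c : a <= b -> c + a <= c + b.
Proof. rewrite (add_comm c a), (add_comm c b). apply add_le_mono_r. Qed.

Lemma add_le_mono a b c d : a <= b -> c <= d -> a + c <= b + d.
Proof. intros H1 H2. eapply le_trans; [apply add_le_mono_r, H1|apply add_le_mono_l, H2]. Qed.

Lemma le_add_r a n : a <= a + n.
Proof. rewrite <- (add_0_r a) at 1. apply add_le_mono_l, le_0_l. Qed.

Lemma le_add_l a n : a <= n + a.
Proof. rewrite add_comm; apply le_add_r. Qed.

Lemma mul_0_l x : z * x = z.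
Proof.
  revert x. delta0_induction (fEq (tmul tzero (tvar 0)) tzero) (fun _ : nat => z).
  - apply mul_0_r.
  - intros m IH. rewrite mul_succ_r, IH, add_0_r; reflexivity.
Qed.

Lemma mul_succ_l x y : sc x * y = x * y + y.
Proof.
  revert y.
  delta0_induction (fEq (tmul (tadd (tvar 1) tone) (tvar 0)) (tadd (tmul (tvar 1) (tvar 0)) (tvar 0)))
    (scons x (fun _ => z)).
  - rewrite !mul_0_r, add_0_r; reflexivity.
  - intros m IH. rewrite !mul_succ_r, IH, !add_succ_r, !add_assoc, !add_succ_r, (add_comm m x).
    reflexivity.
Qed.

Lemma mul_le_mono_r u v w : u <= v -> u * w <= v * w.
Proof.
  revert w.
  delta0_induction (fImp (fOr (fLt (tvar 1) (tvar 2)) (fEq (tvar 1) (tvar 2)))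
      (fOr (fLt (tmul (tvar 1) (tvar 0)) (tmul (tvar 2) (tvar 0)))
           (fEq (tmul (tvar 1) (tvar 0)) (tmul (tvar 2) (tvar 0)))))
    (scons u (scons v (fun _ => z))).
  - rewrite !mul_0_r; intros _; apply le_refl.
  - intros m IH H. rewrite !mul_succ_r. apply add_le_mono; [apply IH|]; exact H.
Qed.

Lemma mul_le_mono_l u v w : u <= v -> w * u <= w * v.
Proof.
  revert w.
  delta0_induction (fImp (fOr (fLt (tvar 1) (tvar 2)) (fEq (tvar 1) (tvar 2)))
      (fOr (fLt (tmul (tvar 0) (tvar 1)) (tmul (tvar 0) (tvar 2)))
           (fEq (tmul (tvar 0) (tvar 1)) (tmul (tvar 0) (tvar 2)))))
    (scons u (scons v (fun _ => z))).
  - rewrite !mul_0_l; intros _; apply le_refl.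
  - intros m IH H. rewrite !mul_succ_l. apply add_le_mono; [apply IH|]; exact H.
Qed.

Lemma le_mul_diag u : u <= u * u.
Proof.
  destruct (zero_or_succ u) as [->|[p ->]]; [rewrite mul_0_r; apply le_refl|].
  rewrite mul_succ_r. apply le_add_l.
Qed.

Lemma pr_lt m n m' n' : m + n < m' + n' -> pr A m n < pr A m' n'.
Proof.
  intros H. unfold pr. set (s := m + n) in *. set (s' := m' + n') in *.
  apply (le_lt_trans _ (s * s + s)); [apply add_le_mono_l, le_add_r|].
  apply (lt_le_trans _ (sc s * sc s)).
  - rewrite mul_succ_r, mul_succ_l, add_succ_r.
    eapply le_lt_trans; [apply le_add_r|apply lt_succ_diag_r].
  - eapply le_trans; [|apply le_add_r].
    eapply le_trans; [apply mul_le_mono_r|apply mul_le_mono_l]; apply le_succ_l, H.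
Qed.

Lemma pr_inj m n m' n' : pr A m n = pr A m' n' -> m = m' /\ n = n'.
Proof.
  intros E. destruct (lt_trichotomy (m + n) (m' + n')) as [H|[H|H]].
  - apply pr_lt in H. rewrite E in H. exfalso; eapply lt_irrefl; eauto.
  - unfold pr in E. rewrite H in E. apply add_cancel_l in E as ->.
    split; [reflexivity|eapply add_cancel_l; eauto].
  - apply pr_lt in H. rewrite E in H. exfalso; eapply lt_irrefl; eauto.
Qed.

Lemma le_pr_l m n : m <= pr A m n.
Proof. apply le_add_l. Qed.

Lemma le_pr_r m n : n <= pr A m n.
Proof.
  eapply le_trans; [|apply le_add_r]. eapply le_trans; [|apply le_mul_diag]. apply le_add_l.
Qed.

Lemma delta0_least_witness q rho : Delta00 q -> forall a, sat A (scons a rho) sig q ->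
  exists c, sat A (scons c rho) sig q /\ forall x, x < c -> ~ sat A (scons x rho) sig q.
Proof.
  intros Hq a Ha.
  pose (q1 := rename (fun i => match i with 0 => 0 | S t => S (S t) end) q).
  pose (q2 := rename (fun i => match i with 0 => 0 | S t => S (S (S t)) end) q).
  assert (E1 : forall c n, sat A (scons c (scons n rho)) sig q1 <-> sat A (scons c rho) sig q)
    by (intros; apply sat_rename; intros [|t]; reflexivity).
  assert (E2 : forall x c n,
      sat A (scons x (scons c (scons n rho))) sig q2 <-> sat A (scons x rho) sig q)
    by (intros; apply sat_rename; intros [|t]; reflexivity).
  (* L(n): some witness below n has no witness below it, or there is no witness below n *)
  pose (L := fOr (fBEx (tvar 0) (fAnd q1 (fBAll (tvar 0) (fNot q2)))) (fBAll (tvar 0) (fNot q1))).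
  assert (HL : Delta00 L) by (repeat constructor; apply Delta00_rename; exact Hq).
  pose proof (ID0 L HL rho sig) as H. cbn [L sat eval scons] in H.
  setoid_rewrite E1 in H. setoid_rewrite E2 in H.
  destruct (H (or_intror (fun x Hx => False_ind _ (nlt_0_r x Hx)))) with (m := sc a)
    as [[c [_ [H1 H2]]]|H3].
  - intros m [[c [Hc [H1 H2]]]|H3].
    + left. exists c. repeat split; auto. apply lt_succ_r; auto.
    + destruct (classic (sat A (scons m rho) sig q)) as [Hm|Hm].
      * left. exists m. repeat split; [apply lt_succ_diag_r|exact Hm|exact H3].
      * right. intros x [Hx| ->]%lt_succ_r; auto.
  - exists c; auto.
  - exfalso. apply (H3 a); [apply lt_succ_diag_r|exact Ha].
Qed.

Section Bounding.
Hypothesis SI1 : SigmaInduction 1 A.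

Lemma bounding_monotone chi rho n : Delta00 chi ->
  (forall y b b', b <= b' ->
     sat A (scons b (scons y rho)) sig chi -> sat A (scons b' (scons y rho)) sig chi) ->
  (forall y, y < n -> exists b, sat A (scons b (scons y rho)) sig chi) ->
  exists b, forall y, y < n -> sat A (scons b (scons y rho)) sig chi.
Proof.
  intros Hc Hmono Hex.
  pose (xi := fun i => match i with 0 => 1 | 1 => 0 | S (S t) => S (S (S (S t))) end).
  assert (E : forall y b n', sat A (scons y (scons b (scons n' (scons n rho)))) sig (rename xi chi)
      <-> sat A (scons b (scons y rho)) sig chi)
    by (intros; apply sat_rename; intros [|[|t]]; reflexivity).
  (* P(m): a single b serves every y < m with y < n *)
  pose (P := fEx (fBAll (tvar 1) (fImp (fLt (tvar 0) (tvar 3)) (rename xi chi)))).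
  assert (HP : Sigma0 1 P)
    by (apply Sig_Ex, Delta00_Sigma01; repeat constructor; apply Delta00_rename, Hc).
  pose proof (SI1 P HP (scons n rho) sig) as H. cbn [P sat eval scons] in H.
  setoid_rewrite E in H.
  destruct (H (ex_intro _ z (fun y Hy => False_ind _ (nlt_0_r y Hy)))) with (m := n) as [b Hb].
  - intros m [b Hb]. destruct (classic (m < n)) as [Hm|Hm].
    + destruct (Hex m Hm) as [b2 Hb2]. destruct (le_max b b2) as [c [Hc1 Hc2]].
      exists c. intros y [Hy| ->]%lt_succ_r Hyn;
        [apply (Hmono y b c Hc1), Hb|apply (Hmono m b2)]; auto.
    + exists b. intros y [Hy| ->]%lt_succ_r Hyn; [auto|contradiction].
  - exists b. intros y Hy. apply Hb; auto.
Qed.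

Definition swap_ren (k i : nat) := if i =? k then S k else if i =? S k then k else i.

Lemma prepend_swap_ren {X} (ys : list X) b y rho i :
  prepend ys (scons b (scons y rho)) (swap_ren (length ys) i) =
  prepend ys (scons y (scons b rho)) i.
Proof.
  unfold swap_ren.
  destruct (Nat.eqb_spec i (length ys)) as [->|];
    [|destruct (Nat.eqb_spec i (S (length ys))) as [->|]].
  1, 2: rewrite !prepend_ge, Nat.sub_diag by lia; replace (S (length ys) - length ys) with 1 by lia;
    reflexivity.
  destruct (Nat.lt_ge_cases i (length ys)).
  - rewrite !prepend_lt by lia. apply nth_indep; lia.
  - rewrite !prepend_ge by lia. destruct (i - length ys) as [|[|t]] eqn:Ei; [lia|lia|reflexivity].
Qed.

Lemma bounding_monotone_tuples k : forall psi rho nidx, Delta00 psi ->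
  (forall ys b b', length ys = k -> b <= b' ->
     sat A (prepend ys (scons b rho)) sig psi -> sat A (prepend ys (scons b' rho)) sig psi) ->
  (forall ys, length ys = k -> Forall (fun y => y < rho nidx) ys ->
     exists b, sat A (prepend ys (scons b rho)) sig psi) ->
  exists b, forall ys, length ys = k -> Forall (fun y => y < rho nidx) ys ->
     sat A (prepend ys (scons b rho)) sig psi.
Proof.
  induction k; intros psi rho nidx Hd Hmono Hex.
  - destruct (Hex [] eq_refl (Forall_nil _)) as [b Hb].
    exists b. intros [|] Hl _; [exact Hb|discriminate].
  - (* swap the last entry with the bound b, bound the first k entries, then the last one *)
    pose (psis := rename (swap_ren k) psi).
    assert (E : forall ys b y rho', length ys = k ->
       sat A (prepend ys (scons b (scons y rho'))) sig psis <->
       sat A (prepend (ys ++ [y]) (scons b rho')) sig psi).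
    { intros ys b y rho' <-. rewrite prepend_snoc.
      apply sat_rename. intros i. apply prepend_swap_ren. }
    assert (Hlen : forall ys (y : N), length ys = k -> length (ys ++ [y]) = S k)
      by (intros ys y Hl; rewrite length_app, Hl; cbn; lia).
    pose (chi := fBAlls k (S (S nidx)) psis).
    destruct (bounding_monotone chi rho (rho nidx)) as [b Hb].
    + apply Delta00_fBAlls, Delta00_rename, Hd.
    + intros y b b' Hbb. unfold chi. rewrite !sat_fBAlls. intros H ys Hl Hf.
      apply E; auto. apply (Hmono _ b b'); auto. apply E, H; auto.
    + intros y Hy. destruct (IHk psis (scons y rho) (S nidx)) as [b Hb].
      * apply Delta00_rename, Hd.
      * intros ys b b' Hl Hbb. rewrite !E by auto. apply Hmono; auto.
      * intros ys Hl Hf. setoid_rewrite E; auto. apply Hex; auto. apply Forall_app; auto.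
      * exists b. unfold chi. rewrite sat_fBAlls. exact Hb.
    + exists b. intros ys Hl Hf. destruct (length_S_snoc ys k Hl) as [l' [y [-> Hl']]].
      apply Forall_app in Hf as [Hf1 Hf2]. inversion Hf2; subst.
      apply E; auto. specialize (Hb y H1). unfold chi in Hb. rewrite sat_fBAlls in Hb.
      apply Hb; auto.
Qed.

End Bounding.

Section OrderedRamseyCounterexample.
Hypothesis SI1 : SigmaInduction 1 A.
Hypothesis DC : Delta01Comprehension A.
Hypothesis HORT : ORT A.
Variables (k l : nat) (th : form) (rho0 : nat -> N) (a : N).
Hypothesis Hth : Delta00 th.

Definition pr_term (u v : term) := tadd (tmul (tadd u v) (tadd u v)) u.
Definition le_form u v := fOr (fLt u v) (fEq u v).

(* The graph [{n | exists u v <= n, n = pr u v /\ u <= v}] of [<=], as a Delta^0_0 formula. *)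
Definition le_graph_form :=
  fBEx (tadd (tvar 0) tone) (fBEx (tadd (tvar 1) tone)
    (fAnd (fEq (tvar 2) (pr_term (tvar 1) (tvar 0))) (le_form (tvar 1) (tvar 0)))).

Lemma le_set_exists : exists R, forall u v, mem A (pr A u v) R <-> u <= v.
Proof.
  assert (Hd : Delta00 le_graph_form) by (repeat constructor).
  destruct (DC le_graph_form le_graph_form (Delta00_Sigma01 _ Hd) (Pi_Sig 0 _ (Sig_D0 _ Hd))
              (fun _ => z) sig (fun m => iff_refl _)) as [R HR].
  exists R. intros u v. rewrite HR. cbn [le_graph_form le_form pr_term sat eval scons]. split.
  - intros [u' [_ [v' [_ [E H]]]]]. apply pr_inj in E as [-> ->]. exact H.
  - intros H. exists u. split; [apply lt_succ_le, le_pr_l|].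
    exists v. split; [apply lt_succ_le, le_pr_r|]. split; [reflexivity|exact H].
Qed.

Definition phi x := exists ys, length ys = k /\ forall zs, length zs = l ->
  sat A (prepend zs (prepend ys (scons x rho0))) sig th.

Definition bounded_phi x i j := exists ys, length ys = k /\ Forall (fun y => y < i) ys /\
  forall zs, length zs = l -> Forall (fun w => w < j) zs ->
    sat A (prepend zs (prepend ys (scons x rho0))) sig th.

Lemma sat_phi x : sat A (scons x rho0) sig (fExs k (fAlls l th)) <-> phi x.
Proof.
  rewrite sat_fExs. unfold phi. setoid_rewrite sat_fAlls. reflexivity.
Qed.

Lemma bounded_phi_anti x i j j' : bounded_phi x i j' -> j <= j' -> bounded_phi x i j.
Proof.
  intros [ys [Hy [Hf H]]] Hj. exists ys. split; [exact Hy|split; [exact Hf|]].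
  intros zs Hzl Hfz. apply H; [exact Hzl|].
  eapply Forall_impl; [|exact Hfz]. intros w Hw. exact (lt_le_trans _ _ _ Hw Hj).
Qed.

(* [bounded_phi_form p q r] expresses [bounded_phi] of variables 0, [p], [q], in a context
   where [rho0] starts at variable [S r]. *)
Definition bounded_phi_ren r i := if i <=? k + l then i else (i + r)%nat.
Definition bounded_phi_form p q r :=
  fBExs k p (fBAlls l (q + k)%nat (rename (bounded_phi_ren r) th)).

Lemma Delta00_bounded_phi_form p q r : Delta00 (bounded_phi_form p q r).
Proof. apply Delta00_fBExs, Delta00_fBAlls, Delta00_rename, Hth. Qed.

Lemma prepend_bounded_phi_ren r (env : nat -> N) zs ys : length zs = l -> length ys = k ->
  (forall t, env (S r + t)%nat = rho0 t) ->
  forall i, prepend zs (prepend ys env) (bounded_phi_ren r i) =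
            prepend zs (prepend ys (scons (env 0) rho0)) i.
Proof.
  intros Hzl Hy Hr i. rewrite <- !prepend_app. unfold bounded_phi_ren.
  assert (Hl : length (zs ++ ys) = (l + k)%nat) by (rewrite length_app; lia).
  destruct (Nat.leb_spec i (k + l)); [destruct (Nat.lt_ge_cases i (length (zs ++ ys)))|].
  - rewrite !prepend_lt by lia. apply nth_indep; lia.
  - rewrite !prepend_ge by lia. replace (i - length (zs ++ ys)) with 0 by lia. reflexivity.
  - rewrite !prepend_ge, Hl by lia. destruct (i - (l + k))%nat as [|t] eqn:E; [lia|].
    cbn. rewrite <- Hr. f_equal. lia.
Qed.

Lemma sat_bounded_phi_form p q r env : (forall t, env (S r + t)%nat = rho0 t) ->
  sat A env sig (bounded_phi_form p q r) <-> bounded_phi (env 0) (env p) (env q).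
Proof.
  intros Hr. unfold bounded_phi_form, bounded_phi. rewrite sat_fBExs.
  assert (E : forall ys zs, length ys = k -> length zs = l ->
      sat A (prepend zs (prepend ys env)) sig (rename (bounded_phi_ren r) th) <->
      sat A (prepend zs (prepend ys (scons (env 0) rho0))) sig th)
    by (intros; apply sat_rename, prepend_bounded_phi_ren; auto).
  split; intros [ys [Hy [Hf H]]]; exists ys; (split; [exact Hy|split; [exact Hf|]]);
    rewrite ?sat_fBAlls, prepend_ge, Hy, Nat.add_sub in * by lia;
    intros zs Hzl Hfz; apply E, H; auto.
Qed.

Definition color i j c :=
  c <= a /\ (c = a \/ ~ bounded_phi c i j) /\ forall x, x < c -> bounded_phi x i j.

Lemma color_exists i j : exists c, color i j c.
Proof.
  pose (q := fOr (fEq (tvar 0) (tvar 3)) (fNot (bounded_phi_form 1 2 3))).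
  assert (Hq : Delta00 q) by (repeat constructor; apply Delta00_bounded_phi_form).
  assert (E : forall x, sat A (scons x (scons i (scons j (scons a rho0)))) sig q <->
                        (x = a \/ ~ bounded_phi x i j)).
  { intros x. unfold q. cbn [sat eval scons]. rewrite sat_bounded_phi_form by reflexivity. reflexivity. }
  destruct (delta0_least_witness q (scons i (scons j (scons a rho0))) Hq a) as [c [H1 H2]];
    [apply E; auto|].
  rewrite E in H1. exists c. split; [|split; [exact H1|]].
  - apply nlt_ge. intros Hac. apply (H2 a Hac), E. auto.
  - intros x Hx. specialize (H2 x Hx). rewrite E in H2. apply NNPP. tauto.
Qed.

Lemma color_unique i j c c' : color i j c -> color i j c' -> c = c'.
Proof.
  intros [H1 [H2 H3]] [H1' [H2' H3']].
  destruct (lt_trichotomy c c') as [H|[H|H]]; auto; exfalso.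
  - destruct H2 as [->|H2]; [eapply lt_nge|apply H2, H3']; eauto.
  - destruct H2' as [->|H2']; [eapply lt_nge|apply H2', H3]; eauto.
Qed.

Lemma color_antitone i j j' c1 c2 : j < j' -> color i j c1 -> color i j' c2 -> c2 <= c1.
Proof.
  intros Hj [H1 [H2 H3]] [H1' [H2' H3']]. apply nlt_ge. intros H.
  destruct H2 as [->|H2]; [eapply lt_nge; eauto|].
  apply H2. eapply bounded_phi_anti; [apply H3', H|left; exact Hj].
Qed.

Definition refutation_ren i := if i <? k + l then i else (i + 2)%nat.

(* Some [zs] below the variable [k] refutes [th]; in context [ys ++ b :: i0 :: x :: rho0]
   that variable is the bound [b] and [i0] is ignored. *)
Definition refutation_form := fBExs l k (fNot (rename refutation_ren th)).

Lemma sat_refutation_form ys b i0 x : length ys = k ->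
  sat A (prepend ys (scons b (scons i0 (scons x rho0)))) sig refutation_form <->
  exists zs, length zs = l /\ Forall (fun w => w < b) zs /\
    ~ sat A (prepend zs (prepend ys (scons x rho0))) sig th.
Proof.
  intros Hy. unfold refutation_form. rewrite sat_fBExs, prepend_ge, Hy, Nat.sub_diag by lia.
  assert (Eren : forall zs, length zs = l -> forall i,
      prepend zs (prepend ys (scons b (scons i0 (scons x rho0)))) (refutation_ren i) =
      prepend zs (prepend ys (scons x rho0)) i).
  { intros zs Hzl i. rewrite <- !prepend_app. unfold refutation_ren.
    assert (Hl : length (zs ++ ys) = (l + k)%nat) by (rewrite length_app; lia).
    destruct (Nat.ltb_spec i (k + l)).
    - rewrite !prepend_lt by lia. apply nth_indep; lia.
    - rewrite !prepend_ge, Hl by lia.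
      replace (i + 2 - (l + k))%nat with (S (S (i - (l + k)))) by lia. reflexivity. }
  split; intros [zs [Hzl [Hf H]]]; exists zs; (split; [exact Hzl|split; [exact Hf|]]);
    cbn [sat] in *; rewrite sat_rename in *; eauto.
Qed.

Lemma phi_of_bounded_phi i0 x : (forall j, bounded_phi x i0 j) -> phi x.
Proof.
  intros HG. apply NNPP. intros Hn.
  destruct (bounding_monotone_tuples SI1 k refutation_form (scons i0 (scons x rho0)) 0) as [b Hb].
  - apply Delta00_fBExs. constructor. apply Delta00_rename, Hth.
  - intros ys b b' Hy Hbb. rewrite !sat_refutation_form by exact Hy. intros [zs [Hzl [Hf H]]].
    exists zs. split; [exact Hzl|split; [|exact H]].
    eapply Forall_impl; [|exact Hf]. intros w Hw. exact (lt_le_trans _ _ _ Hw Hbb).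
  - intros ys Hy _.
    assert (Hne : exists zs, length zs = l /\
                             ~ sat A (prepend zs (prepend ys (scons x rho0))) sig th).
    { apply NNPP. intros Hc. apply Hn. exists ys. split; [exact Hy|].
      intros zs Hzl. apply NNPP. eauto. }
    destruct Hne as [zs [Hzl Hs]]. destruct (list_bounded zs) as [B HB].
    exists B. apply sat_refutation_form; eauto.
  - destruct (HG b) as [ys [Hy [Hf H]]].
    destruct (proj1 (sat_refutation_form ys b i0 x Hy) (Hb ys Hy Hf)) as [zs [Hzl [Hfz Hs]]].
    exact (Hs (H zs Hzl Hfz)).
Qed.

Definition color_form :=
  fAnd (le_form (tvar 0) (tvar 4))
    (fAnd (fOr (fEq (tvar 0) (tvar 4)) (fNot (bounded_phi_form 2 1 4)))
          (fBAll (tvar 0) (bounded_phi_form 3 2 5))).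

Definition color_graph_form :=
  fBEx (tadd (tvar 0) tone) (fBEx (tadd (tvar 1) tone) (fBEx (tadd (tvar 2) tone)
    (fAnd (fEq (tvar 3) (pr_term (pr_term (tvar 2) (tvar 1)) (tvar 0))) color_form))).

Lemma sat_color_form c j i m :
  sat A (scons c (scons j (scons i (scons m (scons a rho0))))) sig color_form <-> color i j c.
Proof.
  assert (HB : forall x, sat A (scons x (scons c (scons j (scons i (scons m (scons a rho0))))))
                   sig (bounded_phi_form 3 2 5) <-> bounded_phi x i j)
    by (intros; rewrite sat_bounded_phi_form by reflexivity; reflexivity).
  unfold color_form, le_form. cbn [sat eval scons]. setoid_rewrite HB.
  rewrite sat_bounded_phi_form by reflexivity. reflexivity.
Qed.

Lemma color_set_exists : exists C, forall i j c, mem A (pr A (pr A i j) c) C <-> color i j c.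
Proof.
  assert (Hd : Delta00 color_graph_form) by (repeat constructor; apply Delta00_bounded_phi_form).
  destruct (DC color_graph_form color_graph_form (Delta00_Sigma01 _ Hd) (Pi_Sig 0 _ (Sig_D0 _ Hd))
              (scons a rho0) sig (fun m => iff_refl _)) as [C HC].
  exists C. intros i j c. rewrite HC. cbn [color_graph_form pr_term sat eval scons]. split.
  - intros [i' [_ [j' [_ [c' [_ [E H]]]]]]].
    apply pr_inj in E as [[-> ->]%pr_inj ->]. apply sat_color_form in H. exact H.
  - intros H. exists i. split.
    { apply lt_succ_le. eapply le_trans; [apply (le_pr_l i j)|apply le_pr_l]. }
    exists j. split.
    { apply lt_succ_le. eapply le_trans; [apply (le_pr_r i j)|apply le_pr_l]. }
    exists c. split; [apply lt_succ_le, le_pr_r|].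
    split; [reflexivity|]. apply sat_color_form, H.
Qed.

Definition unbounded (I : Sets A) := forall m, exists n, m < n /\ mem A n I.

Definition color_homogeneous (I : Sets A) c :=
  forall i j, mem A i I -> mem A j I -> i < j -> color i j c.

Lemma color_homogeneous_exists : exists I c, unbounded I /\ color_homogeneous I c.
Proof.
  destruct le_set_exists as [R HR]. destruct color_set_exists as [C HC].
  destruct (HORT (sc a) R C) as [I [Hinf [c Hhom]]].
  - split; [|split].
    + intros x _. apply HR, le_refl.
    + intros x y _ _ H1%HR H2%HR. apply le_antisymm; assumption.
    + intros x y w _ _ _ H1%HR H2%HR. apply HR. eapply le_trans; eassumption.
  - intros i j _. destruct (color_exists i j) as [c Hc]. exists c.
    split; [apply lt_succ_le, Hc|]. split; [apply HC, Hc|].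
    intros c' Hc'%HC. eapply color_unique; eassumption.
  - intros i j w c1 c2 Hij Hjw H1%HC H2%HC. apply HR. eapply color_antitone; eassumption.
  - exists I, c. split; [exact Hinf|]. intros i j Hi Hj Hij. apply HC, Hhom; assumption.
Qed.

Hypothesis Ha : ~ phi a.

Lemma color_homogeneous_not_phi I c : unbounded I -> color_homogeneous I c -> ~ phi c.
Proof.
  intros Hinf Hhom [ys [Hy Hph]].
  destruct (list_bounded ys) as [B HB]. destruct (Hinf B) as [i [HBi Hi]].
  destruct (Hinf i) as [j [Hij Hj]].
  destruct (Hhom i j Hi Hj Hij) as [_ [[->|Hng] _]]; [apply Ha; exists ys; auto|].
  apply Hng. exists ys. split; [exact Hy|split].
  - eapply Forall_impl; [|exact HB]. intros y Hy'. exact (lt_trans _ _ _ Hy' HBi).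
  - intros zs Hzl _. apply Hph, Hzl.
Qed.

Lemma color_homogeneous_pred_phi I c : unbounded I -> color_homogeneous I (sc c) -> phi c.
Proof.
  intros Hinf Hhom. destruct (Hinf z) as [i [_ Hi]].
  apply (phi_of_bounded_phi i). intros j.
  destruct (le_max i j) as [D [HD1 HD2]]. destruct (Hinf D) as [j' [HDj Hj']].
  destruct (Hhom i j' Hi Hj' (le_lt_trans _ _ _ HD1 HDj)) as [_ [_ Hall]].
  apply (bounded_phi_anti _ _ _ j'); [apply Hall, lt_succ_diag_r|].
  left. eapply le_lt_trans; eassumption.
Qed.

Lemma sigma2_induction_counterexample_absurd : phi z -> (forall m, phi m -> phi (sc m)) -> False.
Proof.
  intros H0 Hs. destruct color_homogeneous_exists as [I [c [Hinf Hhom]]].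
  apply (color_homogeneous_not_phi I c Hinf Hhom).
  destruct (zero_or_succ c) as [->|[c' ->]]; [exact H0|].
  apply Hs, (color_homogeneous_pred_phi I); assumption.
Qed.

End OrderedRamseyCounterexample.
End Model.

Theorem mainTheorem6 :
  forall A : structure, RCA0 A -> ORT A -> SigmaInduction 2 A.
Proof.
  intros A [BA [SI1 DC]] HORT p Hp.
  destruct (Sigma02_normal_form p Hp) as [k [l [th [Hth ->]]]].
  intros rho sig H0 Hs a. apply NNPP. intros Ha.
  apply (sigma2_induction_counterexample_absurd A sig BA (fun q Hq => SI1 q (Delta00_Sigma01 q Hq))
           SI1 DC HORT k l th rho a Hth).
  - setoid_rewrite <- sat_phi. exact Ha.
  - apply sat_phi, H0.
  - intros x Hx. apply sat_phi, Hs, sat_phi, Hx.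
Qed.
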